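(* Let $n\ge0$ and let $\mathcal V$ be a variety with $n+2$ Gumm terms. (i) For every $q\ge1$, $\mathcal V$ is $(2^q+1,\,(2^{q+1}-2)n+2)$-modular. (ii) For every $q\ge2$, $\mathcal V$ is $(2^q-1,\,(2^{q+1}-2q-2)n+2)$-modular.
   Context: $\circ$ is relational composition, juxtaposition is intersection. For relations $X,Y$ and $m\ge1$, $X\circ_m Y$ denotes $X\circ Y\circ X\circ\cdots$ with $m$ factors. For $m\ge3$, a variety is $(m,k)$-modular if each of its algebras satisfies $\alpha(\beta\circ_m\alpha\gamma)\subseteq\alpha\beta\circ_k\alpha\gamma$ for all congruences $\alpha,\beta,\gamma$. A variety has $n+2$ Gumm terms if it has ternary terms $p,j_1,\dots,j_{n+1}$ satisfying: $x=j_i(x,y,x)$ for all $i$; $x=p(x,z,z)$; $p(x,x,z)=j_1(x,x,z)$; $j_i(x,z,z)=j_{i+1}(x,z,z)$ for odd $i\le n$; $j_i(x,x,z)=j_{i+1}(x,x,z)$ for even $i\le n$; $j_{n+1}(x,y,z)=z$. *)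

From mathcomp Require Import all_boot.
Set Implicit Arguments. Unset Strict Implicit. Unset Printing Implicit Defensive.

Record signature := Signature { op_sym : Type; arity : op_sym -> nat }.

Record algebra (S : signature) := Algebra {
  carrier :> Type;
  interp : forall f : op_sym S, ('I_(arity f) -> carrier) -> carrier }.

Inductive term (S : signature) (X : Type) : Type :=
| Var : X -> term S X
| App : forall f : op_sym S, ('I_(arity f) -> term S X) -> term S X.

Fixpoint eval (S : signature) (X : Type) (A : algebra S) (e : X -> A)
  (t : term S X) : A :=
  match t with
  | Var x => e x
  | App f ts => @interp S A f (fun i => eval e (ts i))
  end.

(* A variety = the class of all models of a set E of identities
   (Birkhoff: equivalently, an HSP-closed class). Identities use
   variables from nat. *)
Definition in_variety (S : signature) (E : term S nat -> term S nat -> Prop)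
  (A : algebra S) : Prop :=
  forall s t, E s t -> forall e : nat -> A, eval e s = eval e t.

Definition rel_comp (T : Type) (X Y : T -> T -> Prop) : T -> T -> Prop :=
  fun a c => exists b, X a b /\ Y b c.
Definition rel_meet (T : Type) (X Y : T -> T -> Prop) : T -> T -> Prop :=
  fun a b => X a b /\ Y a b.
Definition rel_sub (T : Type) (X Y : T -> T -> Prop) : Prop :=
  forall a b, X a b -> Y a b.

Fixpoint circ_m (T : Type) (m : nat) (X Y : T -> T -> Prop) : T -> T -> Prop :=
  match m with
  | 0 => fun a b => a = b
  | 1 => X
  | m'.+1 => rel_comp X (circ_m m' Y X)
  end.

Definition is_congruence (S : signature) (A : algebra S) (R : A -> A -> Prop) : Prop :=
  [/\ (forall a, R a a), (forall a b, R a b -> R b a),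
      (forall a b c, R a b -> R b c -> R a c) &
      (forall (f : op_sym S) (a b : 'I_(arity f) -> A),
          (forall i, R (a i) (b i)) -> R (@interp S A f a) (@interp S A f b))].

Definition modular (S : signature) (E : term S nat -> term S nat -> Prop)
  (m k : nat) : Prop :=
  forall A : algebra S, in_variety E A ->
  forall alpha beta gamma : A -> A -> Prop,
    is_congruence alpha -> is_congruence beta -> is_congruence gamma ->
    rel_sub (rel_meet alpha (circ_m m beta (rel_meet alpha gamma)))
            (circ_m k (rel_meet alpha beta) (rel_meet alpha gamma)).

Definition ev3 (S : signature) (A : algebra S) (t : term S 'I_3) (x y z : A) : A :=
  eval (fun i : 'I_3 => match val i with 0 => x | 1 => y | _ => z end) t.

Definition has_gumm_terms (S : signature) (E : term S nat -> term S nat -> Prop)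
  (n : nat) : Prop :=
  exists (p : term S 'I_3) (j : nat -> term S 'I_3),
  forall A : algebra S, in_variety E A ->
  (forall i, 1 <= i <= n.+1 -> forall x y : A, ev3 (j i) x y x = x) /\
      (forall x z : A, ev3 p x z z = x) /\
      (forall x z : A, ev3 p x x z = ev3 (j 1) x x z) /\
      (forall i, 1 <= i <= n -> odd i -> forall x z : A,
          ev3 (j i) x z z = ev3 (j i.+1) x z z) /\
      (forall i, 1 <= i <= n -> ~~ odd i -> forall x z : A,
          ev3 (j i) x x z = ev3 (j i.+1) x x z) /\
      (forall x y z : A, ev3 (j n.+1) x y z = z).

(* Let (a, c) be in alpha and joined by a beta/(alpha gamma)-path e of odd length m.
   Applying j_i(a, -, c) to e gives (alpha beta)/(alpha gamma)-paths from j_i(a,a,c)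
   to j_i(a,c,c), all inside the alpha-class of a, and the Gumm identities glue them
   into one path of length n(m-1)+1 from p(a,a,c) to c.  To get from a to p(a,a,c),
   fold e at its middle (alpha gamma)-step (e_h, e_(h+1)): the elements
   p(a, e_(h-s), e_(h+1+s)) form a beta/(alpha gamma)-path of length h from a point
   (alpha gamma)-related to a to p(a,a,c), which (h,k)-modularity shortens to
   length k.  So (h,k)-modularity gives (m, k+n(m-1))-modularity for odd h < m <= 2h+1;
   starting from (1,2) and taking m = 2h-1, resp. m = 2h+1, yields both families. *)

From mathcomp Require Import all_boot zify.
Set Implicit Arguments. Unset Strict Implicit. Unset Printing Implicit Defensive.

Section AlternatingPaths.
Variable T : Type.
Implicit Types (X Y : T -> T -> Prop) (a b c : T).

Definition alt X Y (i : nat) := if odd i then Y else X.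

Definition alt_path X Y k a b := exists e : nat -> T,
  [/\ e 0 = a, e k = b & forall i, i < k -> alt X Y i (e i) (e i.+1)].

Lemma altS X Y i : alt X Y i.+1 = alt Y X i.
Proof. by rewrite /alt /=; case: (odd i). Qed.

Lemma alt_addn X Y k i : alt (alt X Y k) (alt Y X k) i = alt X Y (k + i).
Proof. by rewrite /alt oddD; case: (odd k); case: (odd i). Qed.

Lemma circ_mP k X Y a b : circ_m k X Y a b <-> alt_path X Y k a b.
Proof.
elim: k X Y a b => [|k IHk] X Y a b.
  split=> [-> | [e [<- <- _]]] //; by exists (fun=> b).
have -> : circ_m k.+1 X Y a b <-> rel_comp X (circ_m k Y X) a b.
  case: k {IHk} => [|k] //=; split=> [Xab | [b' [Xab <-]]] //; by exists b.
split=> [[b' [Xab /IHk [e [e0 ek He]]]] | [e [e0 ek He]]].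
  exists (fun i => if i is i'.+1 then e i' else a); split=> // -[|i] Hi /=.
    by rewrite /alt /= e0.
  by rewrite altS; apply: He.
exists (e 1); split; first by rewrite -e0; apply: (He 0).
by apply/IHk; exists (fun i => e i.+1); split=> // i Hi; rewrite -altS; apply: He.
Qed.

Lemma alt_path1 X Y a b : alt_path X Y 1 a b <-> X a b.
Proof.
split=> [[e [<- <- He]] | Xab]; first exact: (He 0).
by exists (fun i => if i is 0 then a else b); split=> // -[].
Qed.

Lemma alt_path_rev X Y k a b :
  (forall x y, X x y -> X y x) -> (forall x y, Y x y -> Y y x) ->
  alt_path X Y k a b -> alt_path (alt Y X k) (alt X Y k) k b a.
Proof.
move=> symX symY [e [e0 ek He]].
exists (fun i => e (k - i)); split; rewrite ?subn0 ?subnn // => i ltik.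
have := He (k - i.+1) ltac:(lia); rewrite (_ : (k - i.+1).+1 = k - i); last lia.
have -> : alt (alt Y X k) (alt X Y k) i = alt X Y (k - i.+1).
  by rewrite /alt oddB //=; case: (odd i); case: (odd k).
by rewrite /alt; case: (odd _); [apply: symY | apply: symX].
Qed.

Lemma alt_path_rev_odd X Y k a b :
  (forall x y, X x y -> X y x) -> (forall x y, Y x y -> Y y x) ->
  odd k -> alt_path X Y k a b -> alt_path X Y k b a.
Proof. by move=> symX symY oddk /(alt_path_rev symX symY); rewrite /alt oddk. Qed.

Lemma alt_path_rev_even X Y k a b :
  (forall x y, X x y -> X y x) -> (forall x y, Y x y -> Y y x) ->
  ~~ odd k -> alt_path X Y k a b -> alt_path Y X k b a.
Proof. by move=> symX symY /negPf evenk /(alt_path_rev symX symY); rewrite /alt evenk. Qed.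

Lemma alt_path_pad X Y k k' a b : (forall x, X x x) -> (forall x, Y x x) -> k <= k' ->
  alt_path X Y k a b -> alt_path X Y k' a b.
Proof.
move=> reflX reflY lekk' [e [e0 ek He]].
exists (fun i => e (minn i k)); split; rewrite ?min0n ?(minn_idPr lekk') // => i _.
case: (ltnP i k) => [ltik | leki].
  by rewrite (minn_idPl ltik); apply: He.
by rewrite (minn_idPr (leqW leki)) /alt; case: (odd i).
Qed.

Lemma alt_path_split X Y k1 k2 a c : alt_path X Y (k1 + k2) a c ->
  exists b, alt_path X Y k1 a b /\ alt_path (alt X Y k1) (alt Y X k1) k2 b c.
Proof.
move=> [e [e0 ek He]]; exists (e k1); split.
  by exists e; split=> // i ltik; apply: He; lia.
exists (fun i => e (k1 + i)); split; rewrite ?addn0 // => i ltik.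
by rewrite alt_addn addnS; apply: He; lia.
Qed.

Lemma alt_path_fuse X Y k1 k2 a b c :
  (forall x y z, alt X Y k1 x y -> alt X Y k1 y z -> alt X Y k1 x z) ->
  alt_path X Y k1.+1 a b -> alt_path (alt X Y k1) (alt Y X k1) k2.+1 b c ->
  alt_path X Y (k1 + k2).+1 a c.
Proof.
move=> trans [e [e0 ek He]] [f [f0 fk Hf]].
exists (fun i => if i <= k1 then e i else f (i - k1)); split.
- by rewrite leq0n.
- by rewrite ltnNge leq_addr /= subSn ?leq_addr // addKn.
move=> i ltik; case: (ltngtP i k1) => [ltik1 | gtik1 | ->].
- by apply: He; apply: ltnW.
- have := Hf (i - k1) ltac:(lia).
  by rewrite alt_addn subnKC ?subSn // ltnW.
- rewrite subSnn.
  by apply: (trans _ b); [rewrite -ek; apply: He | rewrite -f0; apply: (Hf 0)].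
Qed.

Lemma alt_path_fuse_iter X Y (s : nat -> T) m r : odd m ->
  (forall x, X x x) -> (forall x y z, X x y -> X y z -> X x z) ->
  (forall i, i < r -> alt_path X Y m (s i) (s i.+1)) ->
  alt_path X Y (r * m.-1).+1 (s 0) (s r).
Proof.
case: m => // m oddm reflX transX; rewrite /= in oddm *.
elim: r => [|r IHr] Hs; first exact/alt_path1.
have evenrm : odd (r * m) = false by rewrite oddM (negPf oddm) andbF.
rewrite mulSn addnC; apply: alt_path_fuse; rewrite /alt ?evenrm //.
  by apply: IHr => i ltir; apply: Hs; apply: ltnW.
exact: Hs.
Qed.

End AlternatingPaths.

Lemma alt_path_map (T U : Type) (X Y : T -> T -> Prop) (X' Y' : U -> U -> Prop)
    (f : T -> U) k a b :
  (forall x y, X x y -> X' (f x) (f y)) -> (forall x y, Y x y -> Y' (f x) (f y)) ->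
  alt_path X Y k a b -> alt_path X' Y' k (f a) (f b).
Proof.
move=> fX fY [e [e0 ek He]]; exists (f \o e); split=> [|| i /He]; rewrite /= ?e0 ?ek //.
by rewrite /alt; case: (odd i); [apply: fY | apply: fX].
Qed.

Lemma alt_path_map2 (T U : Type) (X Y : T -> T -> Prop) (X' Y' : U -> U -> Prop)
    (f : T -> T -> U) k a a' b b' :
  (forall x x' y y', X x x' -> X y y' -> X' (f x y) (f x' y')) ->
  (forall x x' y y', Y x x' -> Y y y' -> Y' (f x y) (f x' y')) ->
  alt_path X Y k a a' -> alt_path X Y k b b' -> alt_path X' Y' k (f a b) (f a' b').
Proof.
move=> fX fY [u [u0 uk Hu]] [v [v0 vk Hv]].
exists (fun i => f (u i) (v i)); split=> [|| i ltik]; rewrite ?u0 ?v0 ?uk ?vk //.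
by move: (Hu i ltik) (Hv i ltik); rewrite /alt; case: (odd i); [apply: fY | apply: fX].
Qed.

Section Congruences.
Variables (S : signature) (A : algebra S).
Implicit Types R : A -> A -> Prop.

Lemma congruence_refl R : is_congruence R -> forall x, R x x.
Proof. by case. Qed.

Lemma congruence_sym R : is_congruence R -> forall x y, R x y -> R y x.
Proof. by case. Qed.

Lemma congruence_trans R : is_congruence R -> forall x y z, R x y -> R y z -> R x z.
Proof. by case. Qed.

Lemma congruence_meet R R' :
  is_congruence R -> is_congruence R' -> is_congruence (rel_meet R R').
Proof.
move=> [r1 s1 t1 c1] [r2 s2 t2 c2]; split=> [a | a b [] | a b c [] ? ? [] | f a b H].
- by split.
- by split; auto.
- by split; eauto.
- by split; [apply: c1 | apply: c2] => i; case: (H i).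
Qed.

Lemma eval_congr R (X : Type) (t : term S X) (e e' : X -> A) :
  is_congruence R -> (forall v, R (e v) (e' v)) -> R (eval e t) (eval e' t).
Proof.
move=> [_ _ _ compatR] Re; elim: t => [x | f ts IHts] /=; first exact: Re.
by apply: compatR => i; apply: IHts.
Qed.

Lemma ev3_congr R t (x y z x' y' z' : A) :
  is_congruence R -> R x x' -> R y y' -> R z z' -> R (ev3 t x y z) (ev3 t x' y' z').
Proof. by move=> congR Rx Ry Rz; apply: eval_congr => // -[[|[|i]] ?]. Qed.

End Congruences.

Section GummTerms.
Variables (S : signature) (A : algebra S) (n : nat).
Variables (p : term S 'I_3) (j : nat -> term S 'I_3).
Hypothesis j_xyx : forall i, 1 <= i <= n.+1 -> forall x y : A, ev3 (j i) x y x = x.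
Hypothesis p_xzz : forall x z : A, ev3 p x z z = x.
Hypothesis p_xxz : forall x z : A, ev3 p x x z = ev3 (j 1) x x z.
Hypothesis j_odd : forall i, 1 <= i <= n -> odd i -> forall x z : A,
  ev3 (j i) x z z = ev3 (j i.+1) x z z.
Hypothesis j_even : forall i, 1 <= i <= n -> ~~ odd i -> forall x z : A,
  ev3 (j i) x x z = ev3 (j i.+1) x x z.
Hypothesis j_last : forall x y z : A, ev3 (j n.+1) x y z = z.

Variables alpha beta gamma : A -> A -> Prop.
Hypotheses (alpha_cong : is_congruence alpha) (beta_cong : is_congruence beta)
  (gamma_cong : is_congruence gamma).

Local Notation ab := (rel_meet alpha beta).
Local Notation ag := (rel_meet alpha gamma).

Let ab_cong : is_congruence ab := congruence_meet alpha_cong beta_cong.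
Let ag_cong : is_congruence ag := congruence_meet alpha_cong gamma_cong.

Let alpha_refl := congruence_refl alpha_cong.
Let alpha_sym := congruence_sym alpha_cong.
Let alpha_trans := congruence_trans alpha_cong.
Let beta_refl := congruence_refl beta_cong.
Let beta_sym := congruence_sym beta_cong.
Let ab_refl := congruence_refl ab_cong.
Let ab_sym := congruence_sym ab_cong.
Let ab_trans := congruence_trans ab_cong.
Let ag_refl := congruence_refl ag_cong.
Let ag_sym := congruence_sym ag_cong.
Let ag_trans := congruence_trans ag_cong.

Definition modular_at m k :=
  forall a c, alpha a c -> alt_path beta ag m a c -> alt_path ab ag k a c.

Lemma modular_at_1_2 : modular_at 1 2.
Proof.
move=> a c alpha_ac /alt_path1 beta_ac.
apply: (alt_path_pad ab_refl ag_refl (isT : 1 <= 2)).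
exact/alt_path1.
Qed.

Lemma alpha_j_left i x c : 1 <= i <= n.+1 -> alpha x c -> forall y, alpha (ev3 (j i) x y c) x.
Proof.
move=> lei alpha_xc y; rewrite -[X in alpha _ X](j_xyx lei x y).
exact: ev3_congr alpha_cong (alpha_refl x) (alpha_refl y) (alpha_sym alpha_xc).
Qed.

Lemma alt_path_pxxz m a c : odd m -> alpha a c -> alt_path beta ag m a c ->
  alt_path ab ag (n * m.-1).+1 (ev3 p a a c) c.
Proof.
move=> oddm alpha_ac path_ac.
have j_path i : 1 <= i <= n -> alt_path ab ag m (ev3 (j i) a a c) (ev3 (j i) a c c).
  move=> lein; have lein1 : 1 <= i <= n.+1 by lia.
  apply: (alt_path_map (f := fun x => ev3 (j i) a x c)) path_ac => x y Rxy.
    split; last exact: ev3_congr beta_cong (beta_refl a) Rxy (beta_refl c).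
    apply: (alpha_trans (alpha_j_left lein1 alpha_ac x)).
    exact: (alpha_sym (alpha_j_left lein1 alpha_ac y)).
  exact: ev3_congr ag_cong (ag_refl a) Rxy (ag_refl c).
pose s i := if odd i then ev3 (j i) a a c else ev3 (j i) a c c.
have step i : 1 <= i <= n -> alt_path ab ag m (s i) (s i.+1).
  move=> lein; rewrite /s /=; case oddi: (odd i) => /=.
    by rewrite -j_odd //; apply: j_path.
  rewrite -j_even ?oddi //.
  exact: alt_path_rev_odd ab_sym ag_sym oddm (j_path i lein).
have := alt_path_fuse_iter (s := fun i => s i.+1) oddm ab_refl ab_trans
  (fun i ltin => step i.+1 ltin).
by rewrite /s /= -p_xxz !j_last; case: (odd n).
Qed.

Lemma fold_alt_path_p m h a c : odd h -> h < m <= h.*2.+1 -> alt_path beta ag m a c ->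
  exists2 x, ag a x & alt_path beta ag h x (ev3 p a a c).
Proof.
(* Fold the path at its middle [ag]-step (b, b'): the pairs (e_(h-s), e_(h+1+s)),
   padded at c, walk back to (a, c) in lockstep, and p(a, b, b) = a. *)
move=> oddh lthm; rewrite (_ : m = h + (1 + (m - h.+1))); last lia.
move=> path_ac; have [b [path_ab path_bc]] := alt_path_split path_ac.
rewrite /alt oddh in path_bc; have [b' [/alt_path1 ag_bb' path_b'c]] := alt_path_split path_bc.
rewrite /alt /= in path_b'c.
have path_ba := alt_path_rev_odd beta_sym ag_sym oddh path_ab.
have {}path_b'c : alt_path beta ag h b' c.
  by apply: (alt_path_pad beta_refl ag_refl _ path_b'c); lia.
exists (ev3 p a b b').
  rewrite -{1}(p_xzz a b).
  exact: ev3_congr ag_cong (ag_refl a) (ag_refl b) ag_bb'.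
apply: (alt_path_map2 (f := ev3 p a)) path_ba path_b'c => x x' y y' Rx Ry.
  exact: ev3_congr beta_cong (beta_refl a) Rx Ry.
exact: ev3_congr ag_cong (ag_refl a) Rx Ry.
Qed.

Lemma modular_at_step m h k : odd m -> odd h -> h < m <= h.*2.+1 ->
  ~~ odd k -> 0 < k -> modular_at h k -> modular_at m (k + n * m.-1).
Proof.
case: k => // k oddm oddh lthm evenk _ mod_hk a c alpha_ac path_ac.
have oddk : odd k by rewrite -[odd k]negbK.
have alpha_ca := alpha_sym alpha_ac.
have path_ca := alt_path_rev_odd beta_sym ag_sym oddm path_ac.
have [x ag_cx path_xy] := fold_alt_path_p oddh lthm path_ca.
set y := ev3 p c c a in path_xy.
have alpha_yx : alpha y x.
  apply: (alpha_trans (y := c)); first by rewrite /y p_xxz; apply: alpha_j_left.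
  by case: ag_cx.
have path_yx := mod_hk y x alpha_yx (alt_path_rev_odd beta_sym ag_sym oddh path_xy).
have path_cy : alt_path ag ab k.+1 c y.
  have path_cx : alt_path ag ab 1 c x by apply/alt_path1.
  apply: (alt_path_fuse (k1 := 0) ag_trans path_cx).
  exact: alt_path_rev_even ab_sym ag_sym evenk path_yx.
have even_nm : ~~ odd (n * m.-1).
  by case: m oddm {lthm path_ac path_ca} => //= m evenm; rewrite oddM (negPf evenm) andbF.
apply: (alt_path_rev_even ag_sym ab_sym); first by rewrite oddD (negPf even_nm) addbF.
rewrite addSn; apply: (alt_path_fuse _ path_cy); rewrite /alt oddk.
  exact: ab_trans.
exact: alt_path_pxxz.
Qed.

Lemma modular_at_3 : modular_at 3 (2 * n + 2).
Proof. by rewrite mulnC addnC; apply: modular_at_step modular_at_1_2. Qed.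

Lemma modular_at_pow_succ q : modular_at (2 ^ q.+1 + 1) ((2 ^ q.+2 - 2) * n + 2).
Proof.
elim: q => [|q IHq]; first exact: modular_at_3.
have pos := expn_gt0 2 q.
rewrite (_ : _ * n + 2 = (2 ^ q.+2 - 2) * n + 2 + n * (2 ^ q.+2 + 1).-1); last first.
  by rewrite !expnS; nia.
apply: modular_at_step IHq.
- by rewrite oddD oddX.
- by rewrite oddD oddX.
- by rewrite !expnS; lia.
- by rewrite (_ : _ + 2 = ((2 ^ q.+1 - 1) * n + 1).*2) ?odd_double // !expnS; nia.
- by rewrite addn2.
Qed.

Lemma modular_at_pow_pred q : modular_at (2 ^ q.+2 - 1) ((2 ^ q.+3 - 2 * q.+2 - 2) * n + 2).
Proof.
elim: q => [|q IHq]; first exact: modular_at_3.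
have lt_q_2q : q < 2 ^ q := ltn_expl q (ltnSn 1).
rewrite (_ : _ * n + 2 = (2 ^ q.+3 - 2 * q.+2 - 2) * n + 2 + n * (2 ^ q.+3 - 1).-1); last first.
  by rewrite !expnS; nia.
apply: modular_at_step IHq.
- by rewrite oddB ?oddX ?expn_gt0.
- by rewrite oddB ?oddX ?expn_gt0.
- by rewrite !expnS; lia.
- by rewrite (_ : _ + 2 = ((2 ^ q.+2 - q.+3) * n + 1).*2) ?odd_double // !expnS; nia.
- by rewrite addn2.
Qed.

End GummTerms.

Lemma modular_of_alt_paths (S : signature) (E : term S nat -> term S nat -> Prop) m k :
  (forall A : algebra S, in_variety E A -> forall alpha beta gamma : A -> A -> Prop,
     is_congruence alpha -> is_congruence beta -> is_congruence gamma ->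
     modular_at alpha beta gamma m k) ->
  modular E m k.
Proof.
move=> mod_paths A inA alpha beta gamma alpha_cong beta_cong gamma_cong a c [alpha_ac].
by move/circ_mP=> path_ac; apply/circ_mP; apply: mod_paths path_ac.
Qed.

Theorem theorem4p8 (S : signature) (E : term S nat -> term S nat -> Prop) (n : nat) :
  has_gumm_terms E n ->
  (forall q, 1 <= q -> modular E (2 ^ q + 1) ((2 ^ q.+1 - 2) * n + 2)) /\
  (forall q, 2 <= q -> modular E (2 ^ q - 1) ((2 ^ q.+1 - 2 * q - 2) * n + 2)).
Proof.
move=> [p [j gumm]].
split=> [[|q] // _ | [|[|q]] // _];
  apply: modular_of_alt_paths => A inA alpha beta gamma alpha_cong beta_cong gamma_cong;
  have [j_xyx [p_xzz [p_xxz [j_odd [j_even j_last]]]]] := gumm A inA.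
- exact: (modular_at_pow_succ j_xyx p_xzz p_xxz j_odd j_even j_last).
- exact: (modular_at_pow_pred j_xyx p_xzz p_xxz j_odd j_even j_last).
Qed.
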